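(* Let $p$ be an odd prime and let $h,a$ be integers with $1\le h,a\le p-1$ and $\gcd(h,a,p-1)=1$. Then $h^{h}\equiv a^{a}\pmod p$ if and only if there exists an integer $g$ with $1\le g\le p-1$ such that \[ g^{h}\equiv a \pmod p\quad\text{and}\quad g^{a}\equiv h\pmod p, \] and in that case such $g$ is unique (explicitly, $g\equiv h^{v_0}a^{u_0}\pmod p$ for any integers $u_0,v_0$ with $u_0h+v_0a\equiv 1\pmod{p-1}$). Consequently, triples $(g,h,a)$ satisfying the two congruences above correspond bijectively (via $(g,h,a)\mapsto(h,a)$) to pairs $(h,a)$ satisfying $h^h\equiv a^a\pmod p$, among those with $\gcd(h,a,p-1)=1$; in particular this holds whenever $\gcd(h,p-1)=1$ or $\gcd(a,p-1)=1$. *)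

From mathcomp Require Export all_boot all_algebra.
Set Implicit Arguments.
Unset Strict Implicit.
Unset Printing Implicit Defensive.

From mathcomp Require Import all_boot all_algebra all_field.
From mathcomp Require Import ring.
Import GRing.Theory.

Set Implicit Arguments.
Unset Strict Implicit.
Unset Printing Implicit Defensive.

(* By Fermat, exponents of units of F_p live in Z/(p-1), and gcd(h, a, p-1) = 1
   gives a Bezout relation u h + v a = 1 mod p-1.  If g^h = a and g^a = h then
   g = g^(u h + v a) = a^u h^v, so g is unique and given by this formula.
   Conversely, if h^h = a^a then g := h^v a^u satisfies
   g^h = a^(v a) a^(u h) = a and g^a = h^(v a) h^(u h) = h. *)

Local Open Scope ring_scope.

Lemma bezoutz_gcd3_mod (h a n : nat) : gcdn (gcdn h a) n = 1%N ->
  exists u v : int, (u * h%:Z + v * a%:Z = 1 %[mod n])%Z.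
Proof.
move=> gcd_han.
have [u1 [v1 Euv1]] := Bezoutz h a.
have [s [t Est]] := Bezoutz (gcdn h a) n.
have {}Est : s * (gcdn h a)%:Z + t * n%:Z = 1 by rewrite Est /gcdz /= gcd_han.
exists (s * u1), (s * v1); apply/eqP; rewrite eqz_mod_dvd; apply/dvdzP.
by exists (- t); rewrite -Est -[Posz (gcdn h a)]Euv1; ring.
Qed.

Section FinFieldCommonRoot.
Variable F : finFieldType.
Local Notation N := #|F|.-1.

Lemma expf_card_pred (x : F) : x != 0 -> x ^+ N = 1.
Proof.
move=> x_nz; apply: (mulfI x_nz); rewrite mulr1 -exprS prednK ?expf_card //.
by apply/card_gt0P; exists 0.
Qed.

Lemma expfz_modn (x : F) (m n : int) : x != 0 ->
  (m = n %[mod N])%Z -> x ^ m = x ^ n.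
Proof.
move=> x_nz /eqP; rewrite eqz_mod_dvd => /dvdzP [q Emn].
rewrite -(subrK n m) exprzDr ?unitfE // Emn [q * _]mulrC -exprz_exp.
by rewrite -exprnP expf_card_pred // exp1rz mul1r.
Qed.

Variables (h a : nat) (u v : int).
Hypothesis bezout_uv : (u * h%:Z + v * a%:Z = 1 %[mod N])%Z.

Lemma expfz_bezout (x : F) : x != 0 -> x ^ (u * h%:Z + v * a%:Z) = x.
Proof. by move=> x_nz; rewrite (expfz_modn x_nz bezout_uv) expr1z. Qed.

Lemma common_root_eq (g x y : F) : g != 0 ->
  g ^+ h = y -> g ^+ a = x -> g = x ^ v * y ^ u.
Proof.
move=> g_nz <- <-.
rewrite -[X in X = _](expfz_bezout g_nz) exprzDr ?unitfE //.
by rewrite !exprnP !exprz_exp mulrC [u * _]mulrC [v * _]mulrC.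
Qed.

Lemma common_root_spec (x y : F) : x != 0 -> y != 0 -> x ^+ h = y ^+ a ->
  (x ^ v * y ^ u) ^+ h = y /\ (x ^ v * y ^ u) ^+ a = x.
Proof.
move=> x_nz y_nz Exy.
have powzC (z : F) (w : int) (k : nat) : (z ^ w) ^+ k = (z ^+ k) ^ w.
  by rewrite !exprnP !exprz_exp mulrC.
have exprz_nat (z : F) (k : nat) (w : int) : (z ^+ k) ^ w = z ^ (k%:Z * w).
  by rewrite exprnP exprz_exp.
split; rewrite exprMn !powzC.
- rewrite Exy !exprz_nat -exprzDr ?unitfE //.
  by rewrite -[RHS](expfz_bezout y_nz); congr (_ ^ _); ring.
- rewrite -Exy !exprz_nat -exprzDr ?unitfE //.
  by rewrite -[RHS](expfz_bezout x_nz); congr (_ ^ _); ring.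
Qed.

End FinFieldCommonRoot.

Section PrimeFieldTransfer.
Variable p : nat.
Hypothesis p_pr : prime p.

Lemma Fp_nat_eqP (m n : nat) : (m%:R : 'F_p) = n%:R <-> (m = n %[mod p])%N.
Proof.
split=> [/(congr1 (@nat_of_ord _))|Emn]; first by rewrite !val_Fp_nat.
by rewrite -(Fp_nat_mod p_pr m) Emn Fp_nat_mod.
Qed.

Lemma Fp_nat_neq0 (m : nat) : (0 < m < p)%N -> (m%:R : 'F_p) != 0.
Proof.
case/andP=> m_gt0 m_ltp; apply/eqP => /(congr1 (@nat_of_ord _)).
by rewrite val_Fp_nat // modn_small // => m0; rewrite m0 in m_gt0.
Qed.

Lemma Fp_nat_inj (m n : nat) : (m < p)%N -> (n < p)%N ->
  (m%:R : 'F_p) = n%:R -> m = n.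
Proof. by move=> m_ltp n_ltp /Fp_nat_eqP; rewrite !modn_small. Qed.

Lemma expn_Fp_eqP (g m n : nat) :
  (g ^ m = n %[mod p])%N <-> (g%:R : 'F_p) ^+ m = n%:R.
Proof. by rewrite -natrX; split=> /Fp_nat_eqP. Qed.

Lemma Fp_nat_of_unit (x : 'F_p) :
  x != 0 -> exists2 g : nat, (0 < g < p)%N & x = g%:R.
Proof.
move=> x_nz; exists (nat_of_ord x); last by rewrite natr_Zp.
rewrite lt0n (leq_trans (ltn_ord x) (eq_leq (Fp_cast p_pr))) andbT.
by apply: contraNneq x_nz => x0; rewrite -[x]natr_Zp x0.
Qed.

End PrimeFieldTransfer.

Local Close Scope ring_scope.

Theorem mainTheorem5 (p h a : nat) :
  prime p -> odd p ->
  0 < h < p -> 0 < a < p ->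
  gcdn (gcdn h a) p.-1 = 1 ->
  (* existence criterion *)
  ((h ^ h = a ^ a %[mod p]) <->
     (exists g : nat, [/\ 0 < g < p, g ^ h = a %[mod p] & g ^ a = h %[mod p]]))
  /\
  (* uniqueness of g *)
  (forall g1 g2 : nat,
     0 < g1 < p -> g1 ^ h = a %[mod p] -> g1 ^ a = h %[mod p] ->
     0 < g2 < p -> g2 ^ h = a %[mod p] -> g2 ^ a = h %[mod p] ->
     g1 = g2)
  /\
  (* explicit formula g = h^{v0} a^{u0} in Z/pZ, for any integers u0, v0
     with u0 h + v0 a = 1 mod (p-1) *)
  (forall (g : nat) (u0 v0 : int),
     0 < g < p -> g ^ h = a %[mod p] -> g ^ a = h %[mod p] ->
     ((u0 * h%:Z + v0 * a%:Z)%R = 1 %[mod p.-1])%Z ->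
     (g%:R)%R = ((h%:R)%R ^ v0 * (a%:R)%R ^ u0 :> 'F_p)%R).
Proof.
move=> p_pr _ h_bd a_bd gcd_ha.
have card_pred : #|'F_p|.-1 = p.-1 by rewrite card_Fp.
have [u [v bezout_uv]] := bezoutz_gcd3_mod gcd_ha.
have formula g u0 v0 : (0 < g < p)%N -> (g ^ h = a %[mod p])%N ->
    (g ^ a = h %[mod p])%N -> ((u0 * h%:Z + v0 * a%:Z)%R = 1 %[mod p.-1])%Z ->
    (g%:R = h%:R ^ v0 * a%:R ^ u0 :> 'F_p)%R.
  move=> g_bd /(expn_Fp_eqP p_pr) gh /(expn_Fp_eqP p_pr) ga bezout0.
  rewrite -card_pred in bezout0.
  exact (common_root_eq bezout0 (Fp_nat_neq0 p_pr g_bd) gh ga).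
split; [split | split=> //].
- move/(expn_Fp_eqP p_pr); rewrite natrX => Ehha.
  rewrite -card_pred in bezout_uv.
  have hF := Fp_nat_neq0 p_pr h_bd; have aF := Fp_nat_neq0 p_pr a_bd.
  have [gh ga] := common_root_spec bezout_uv hF aF Ehha.
  have [g g_bd Eg] :
      exists2 g : nat, 0 < g < p & (h%:R ^ v * a%:R ^ u = g%:R :> 'F_p)%R.
    by apply/(Fp_nat_of_unit p_pr)/mulf_neq0;
      rewrite expfz_eq0 ?(negbTE hF) ?(negbTE aF) andbF.
  by exists g; split=> //; apply/(expn_Fp_eqP p_pr); rewrite -Eg.
- case=> g [_ /(expn_Fp_eqP p_pr) gh /(expn_Fp_eqP p_pr) ga].
  by apply/(expn_Fp_eqP p_pr); rewrite natrX -ga -gh -!exprM mulnC.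
- move=> g1 g2 g1_bd g1h g1a g2_bd g2h g2a.
  apply: (Fp_nat_inj p_pr); [by case/andP: g1_bd | by case/andP: g2_bd |].
  by rewrite (formula _ _ _ g1_bd g1h g1a bezout_uv)
             (formula _ _ _ g2_bd g2h g2a bezout_uv).
Qed.
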